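(* Let $Z,X$ be real vector spaces, $\Omega\subseteq Z$ nonempty, $f:Z\to X$, and let $K\subseteq X$ be a nontrivial convex cone with a convex base $B$. If $x_0\in O^s$, then $x_0$ is a VH solution.
   Context: $X'$ is the algebraic dual of $X$. $K$ nontrivial means $K\ne\{0\}$, $K\ne X$. A base of $K$ is a set $B$ with $0\notin B$ such that each $k\in K\setminus\{0\}$ has a unique representation $k=tb$, $t>0$, $b\in B$. $K^{+s}:=\{l\in X':\ l(a)>0\ \forall a\in K\setminus\{0\}\}$. For $l\in X'$, $O_l$ is the set of minimizers of $x\mapsto l(f(x))$ over $\Omega$, and $O^s:=\{x_0\in\Omega:\ \exists l\in K^{+s} \text{ with } x_0\in O_l\}$. $cor(A):=\{x\in A:\ \forall x'\in X\ \exists \lambda'>0 \text{ with } x+\lambda x'\in A\ \forall\lambda\in[0,\lambda']\}$. $x_0\in\Omega$ is a VH solution if there is a pointed convex cone $C\subseteq X$ ($C\cap(-C)=\{0\}$) with $K\setminus\{0\}\subseteq cor(C)$ and $(f(\Omega)-f(x_0))\cap(-C)=\{0\}$. *)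

From mathcomp Require Import all_boot all_order all_algebra.
From mathcomp Require Import boolp classical_sets reals.
Set Implicit Arguments. Unset Strict Implicit. Unset Printing Implicit Defensive.
Import Order.TTheory GRing.Theory Num.Theory.
Local Open Scope ring_scope.
Local Open Scope classical_set_scope.

Section Defs.
Variable R : realType.

Definition lin_functional (X : lmodType R) (l : X -> R) : Prop :=
  forall (a : R) (x y : X), l (a *: x + y) = a * l x + l y.

Definition convex_set (X : lmodType R) (A : set X) : Prop :=
  forall x y (t : R), A x -> A y -> 0 <= t -> t <= 1 ->
    A (t *: x + (1 - t) *: y).

Definition is_cone (X : lmodType R) (K : set X) : Prop :=
  K 0 /\ forall (t : R) k, K k -> 0 <= t -> K (t *: k).

Definition convex_cone (X : lmodType R) (K : set X) : Prop :=
  is_cone K /\ convex_set K.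

Definition pointed (X : lmodType R) (C : set X) : Prop :=
  C `&` [set - x | x in C] = [set 0].

Definition nontrivial (X : lmodType R) (K : set X) : Prop :=
  K <> [set 0] /\ K <> setT.

Definition is_base (X : lmodType R) (K B : set X) : Prop :=
  ~ B 0 /\
  forall k, K k -> k <> 0 ->
    exists t b, [/\ 0 < t, B b & k = t *: b] /\
    forall t' b', 0 < t' -> B b' -> k = t' *: b' -> t' = t /\ b' = b.

Definition Kplus_s (X : lmodType R) (K : set X) : set (X -> R) :=
  [set l | lin_functional l /\ forall a, K a -> a <> 0 -> 0 < l a].

Definition O_l (Z X : lmodType R) (Omega : set Z) (f : Z -> X) (l : X -> R)
  : set Z :=
  [set x | Omega x /\ forall y, Omega y -> l (f x) <= l (f y)].

Definition O_s (Z X : lmodType R) (Omega : set Z) (f : Z -> X) (K : set X)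
  : set Z :=
  [set x0 | Omega x0 /\ exists l, Kplus_s K l /\ O_l Omega f l x0].

Definition cor (X : lmodType R) (A : set X) : set X :=
  [set x | A x /\ forall x' : X, exists2 lam' : R, 0 < lam' &
     forall lam : R, 0 <= lam -> lam <= lam' -> A (x + lam *: x')].

Definition VH_solution (Z X : lmodType R) (Omega : set Z) (f : Z -> X)
  (K : set X) (x0 : Z) : Prop :=
  Omega x0 /\
  exists C : set X, [/\ convex_cone C, pointed C,
     K `\ 0 `<=` cor C &
     [set f x - f x0 | x in Omega] `&` [set - c | c in C] = [set 0]].

End Defs.

From mathcomp Require Import all_boot all_order all_algebra.
From mathcomp Require Import boolp classical_sets reals.
From mathcomp Require Import lra.
Import Order.TTheory GRing.Theory Num.Theory.
Set Implicit Arguments. Unset Strict Implicit.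
Local Open Scope ring_scope.
Local Open Scope classical_set_scope.

(* Take l in K^{+s} such that x0 minimizes l o f on Omega, and let
   C = {0} u {l > 0}.  C is a pointed convex cone; the open half-space
   {l > 0}, which contains K \ {0}, is algebraically open, hence lies in
   cor C; and minimality of l (f x0) says exactly that f(Omega) - f(x0)
   meets -C only in 0. *)

Section LinearFunctional.
Variables (R : realType) (X : lmodType R) (l : X -> R).
Hypothesis l_lin : lin_functional l.

Lemma lin_functional0 : l 0 = 0.
Proof.
have := l_lin 1 0 0; rewrite scaler0 addr0 mul1r => l00.
by apply: (@addrI _ (l 0)); rewrite -l00 addr0.
Qed.

Lemma lin_functionalZ t x : l (t *: x) = t * l x.
Proof. by have := l_lin t x 0; rewrite !addr0 lin_functional0 addr0. Qed.

Lemma lin_functionalD x y : l (x + y) = l x + l y.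
Proof. by have := l_lin 1 x y; rewrite scale1r mul1r. Qed.

Lemma lin_functionalN x : l (- x) = - l x.
Proof. by rewrite -scaleN1r lin_functionalZ mulN1r. Qed.

Lemma lin_functionalB x y : l (x - y) = l x - l y.
Proof. by rewrite lin_functionalD lin_functionalN. Qed.

Definition lpos_cone : set X := [set x | x = 0 \/ 0 < l x].

Lemma lpos_cone0 : lpos_cone 0.
Proof. by left. Qed.

Lemma lpos_cone_ge0 x : lpos_cone x -> 0 <= l x.
Proof. by case=> [->|/ltW //]; rewrite lin_functional0. Qed.

Lemma lpos_coneZ t x : 0 <= t -> lpos_cone x -> lpos_cone (t *: x).
Proof.
move=> t_ge0 [->|lx_gt0]; first by rewrite scaler0; left.
have [->|t_neq0] := eqVneq t 0; first by rewrite scale0r; left.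
by right; rewrite lin_functionalZ mulr_gt0 // lt_def t_neq0.
Qed.

Lemma lpos_coneD x y : lpos_cone x -> lpos_cone y -> lpos_cone (x + y).
Proof.
move=> [->|lx_gt0]; first by rewrite add0r.
move=> [->|ly_gt0]; first by rewrite addr0; right.
by right; rewrite lin_functionalD addr_gt0.
Qed.

Lemma lpos_cone_convex_cone : convex_cone lpos_cone.
Proof.
split; first by split=> [|t k Ck t_ge0]; [exact: lpos_cone0 | exact: lpos_coneZ].
move=> x y t Cx Cy t_ge0 t_le1.
by apply: lpos_coneD; apply: lpos_coneZ => //; rewrite subr_ge0.
Qed.

Lemma cor_lpos_cone x : 0 < l x -> cor lpos_cone x.
Proof.
move=> lx_gt0; split; first by right.
move=> x'; have denom_gt0 : 0 < `|l x'| + 1 by rewrite ltr_wpDl.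
exists (l x / (`|l x'| + 1)); first by rewrite divr_gt0.
move=> lam lam_ge0 lam_le; right.
have lam_small : lam * `|l x'| < l x.
  apply: (le_lt_trans (ler_wpM2r (normr_ge0 (l x')) lam_le)).
  rewrite -[ltRHS](divfK (lt0r_neq0 denom_gt0)) ltr_pM2l ?divr_gt0 //.
  by rewrite ltrDl.
have : - (lam * l x') <= lam * `|l x'| by rewrite -mulrN ler_wpM2l // -normrN ler_norm.
rewrite lin_functionalD lin_functionalZ; lra.
Qed.

Lemma meet_opp_lpos_cone (A : set X) :
  A 0 -> (forall a, A a -> 0 <= l a) ->
  A `&` [set - c | c in lpos_cone] = [set 0].
Proof.
move=> A0 A_ge0; rewrite eqEsubset; split=> v; last first.
  by move=> ->; split=> //; exists 0; [exact: lpos_cone0 | rewrite oppr0].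
move=> [Av [c Cc cv]]; subst v; case: Cc Av => [->|lc_gt0]; first by rewrite oppr0.
by move/A_ge0; rewrite lin_functionalN oppr_ge0 leNgt lc_gt0.
Qed.

Lemma lpos_cone_pointed : pointed lpos_cone.
Proof. exact: meet_opp_lpos_cone lpos_cone0 lpos_cone_ge0. Qed.

End LinearFunctional.

Theorem theorem4p16 (R : realType) (Z X : lmodType R) (Omega : set Z)
  (f : Z -> X) (K B : set X) (x0 : Z) :
  Omega !=set0 ->
  convex_cone K -> nontrivial K ->
  is_base K B -> convex_set B ->
  O_s Omega f K x0 ->
  VH_solution Omega f K x0.
Proof.
move=> _ _ _ _ _ [Omega_x0 [l [[l_lin l_posK] [_ x0_min]]]].
split=> //; exists (lpos_cone l); split.
- exact: lpos_cone_convex_cone.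
- exact: lpos_cone_pointed.
- by move=> k [Kk k_neq0]; apply: cor_lpos_cone => //; apply: l_posK.
- apply: meet_opp_lpos_cone => // [|_ [x Omega_x <-]].
    by exists x0; rewrite ?subrr.
  by rewrite lin_functionalB // subr_ge0; apply: x0_min.
Qed.
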